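(* Let $\sigma$ be a signature containing $\triangleright$ and let $\mathcal{A}$ be a $\sigma$-algebra that is representable by partial functions. Then $\lhd$ is completely left-distributive over meets: for every nonempty $S\subseteq\mathcal{A}$ such that $\bigwedge S$ exists and every $a\in\mathcal{A}$, $\bigwedge\{a\lhd s:s\in S\}$ exists and equals $a\lhd\bigwedge S$.
   Context: Signatures $\sigma$ are sets of operation symbols drawn from: $\triangleright$ (antidomain restriction), $;$ (composition), $\wedge$ (intersection), $\mathrm{upd}$ (update), $\sqcup$ (preferential union), $\mathsf{D}$ (domain), $\mathsf{A}$ (antidomain), interpreted on partial functions as: $f \triangleright g = \{(x,y) \in g : x \notin \mathrm{dom}(f)\}$; $f;g$ = relational composition ($f$ first); $f\wedge g = f\cap g$; $\mathrm{upd}(f,g)(x)$ is $f(x)$ if $f(x)$ defined and $g(x)$ undefined, $g(x)$ if both defined, undefined otherwise; $(f\sqcup g)(x)$ is $f(x)$ if defined, else $g(x)$; $\mathsf{D}(f)$ = identity on $\mathrm{dom}(f)$; $\mathsf{A}(f)$ = identity on the complement of $\mathrm{dom}(f)$ in the base. $\mathcal{A}$ is representable if isomorphic to a $\sigma$-algebra of partial functions with these operations. Define $0 := a\triangleright a$, $a\lhd b := (a\triangleright b)\triangleright b$ (restriction of $b$ to the domain of $a$), $a \le b :\iff a\lhd b = a$; meets are taken in the poset $(\mathcal{A},\le)$. *)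

Inductive opsym : Type :=
  | s_ar    (* antidomain restriction  ▷ *)
  | s_comp
  | s_meet
  | s_upd
  | s_pu    (* preferential union ⊔ *)
  | s_D
  | s_A.

Definition signature := opsym -> Prop.

(** Interpretations of all symbols on a carrier; in a sigma-algebra only the
    symbols in sigma are meaningful (the others are ignored everywhere). *)
Record ops (A : Type) := Ops {
  o_ar   : A -> A -> A;
  o_comp : A -> A -> A;
  o_meet : A -> A -> A;
  o_upd  : A -> A -> A;
  o_pu   : A -> A -> A;
  o_D    : A -> A;
  o_A    : A -> A }.
Arguments o_ar {A}. Arguments o_comp {A}. Arguments o_meet {A}.
Arguments o_upd {A}. Arguments o_pu {A}. Arguments o_D {A}. Arguments o_A {A}.

Definition rel (X : Type) := X -> X -> Prop.
Definition pfun {X : Type} (f : rel X) : Prop :=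
  forall x y z, f x y -> f x z -> y = z.
Definition dom {X : Type} (f : rel X) (x : X) : Prop := exists y, f x y.

Definition r_ar   {X} (f g : rel X) : rel X := fun x y => g x y /\ ~ dom f x.
Definition r_comp {X} (f g : rel X) : rel X := fun x y => exists z, f x z /\ g z y.
Definition r_meet {X} (f g : rel X) : rel X := fun x y => f x y /\ g x y.
Definition r_upd  {X} (f g : rel X) : rel X :=
  fun x y => (f x y /\ ~ dom g x) \/ (g x y /\ dom f x).
Definition r_pu   {X} (f g : rel X) : rel X :=
  fun x y => f x y \/ (g x y /\ ~ dom f x).
Definition r_D    {X} (f : rel X) : rel X := fun x y => x = y /\ dom f x.
Definition r_A    {X} (f : rel X) : rel X := fun x y => x = y /\ ~ dom f x.

Definition preserves (sigma : signature) {A X : Type} (o : ops A)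
    (theta : A -> rel X) : Prop :=
  (sigma s_ar   -> forall a b, theta (o_ar o a b)   = r_ar   (theta a) (theta b)) /\
  (sigma s_comp -> forall a b, theta (o_comp o a b) = r_comp (theta a) (theta b)) /\
  (sigma s_meet -> forall a b, theta (o_meet o a b) = r_meet (theta a) (theta b)) /\
  (sigma s_upd  -> forall a b, theta (o_upd o a b)  = r_upd  (theta a) (theta b)) /\
  (sigma s_pu   -> forall a b, theta (o_pu o a b)   = r_pu   (theta a) (theta b)) /\
  (sigma s_D    -> forall a,   theta (o_D o a)      = r_D    (theta a)) /\
  (sigma s_A    -> forall a,   theta (o_A o a)      = r_A    (theta a)).

(** Representable: isomorphic to a sigma-algebra of partial functions on some
    base set X, i.e. there is an injective sigma-homomorphism into the
    partial functions on X (its image is then a sigma-algebra of partial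
    functions isomorphic to the given algebra). *)
Definition representable (sigma : signature) (A : Type) (o : ops A) : Prop :=
  exists (X : Type) (theta : A -> rel X),
    (forall a, pfun (theta a)) /\
    (forall a b, theta a = theta b -> a = b) /\
    preserves sigma o theta.

Definition zero {A} (o : ops A) (a : A) : A := o_ar o a a.
Definition lhd {A} (o : ops A) (a b : A) : A := o_ar o (o_ar o a b) b.
Definition leq_A {A} (o : ops A) (a b : A) : Prop := lhd o a b = a.

Definition is_meet {A} (o : ops A) (S : A -> Prop) (m : A) : Prop :=
  (forall s, S s -> leq_A o m s) /\
  (forall l, (forall s, S s -> leq_A o l s) -> leq_A o l m).

From Stdlib Require Import Classical FunctionalExtensionality PropExtensionality.

(** Fix a representation [th] of the algebra by partial
    functions on a base [X]; only the preservation of antidomain restriction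
    is used.  In the representation, [a ◁ b] is the restriction of [b] to the
    domain of [a] ([lhd_rel]), and [x <= y] is inclusion of graphs
    ([leq_rel]).  Consequently [l <= a ◁ b] holds exactly when [l <= b] and
    the domain of [l] lies inside the domain of [a] ([leq_lhd_iff]).
    The lower-bound half of the theorem is monotonicity of [a ◁ _]
    ([lhd_monotone]).  For the greatest-lower-bound half, a lower bound [l]
    of all [a ◁ s] is a lower bound of [S], hence below [⋀S], and (using one
    element of the nonempty [S]) has its domain inside that of [a]; by
    [leq_lhd_iff] again, [l <= a ◁ ⋀S]. *)

Section Representation.

Variables (A X : Type) (o : ops A) (th : A -> rel X).
Hypothesis th_pfun : forall a, pfun (th a).
Hypothesis th_inj : forall a b, th a = th b -> a = b.
Hypothesis th_ar : forall a b, th (o_ar o a b) = r_ar (th a) (th b).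

Lemma lhd_rel a b u v : th (lhd o a b) u v <-> th b u v /\ dom (th a) u.
Proof.
  unfold lhd. rewrite !th_ar. unfold r_ar. split.
  - intros [Hb Hnot]. split; [exact Hb|].
    apply NNPP. intro Hna. apply Hnot. exists v. split; assumption.
  - intros [Hb Ha]. split; [exact Hb|].
    intros [w [_ Hnot]]. exact (Hnot Ha).
Qed.

(** The order [<=] is inclusion of graphs.  The converse direction uses
    functionality of [th y] and injectivity of [th]. *)
Lemma leq_rel x y : leq_A o x y <-> (forall u v, th x u v -> th y u v).
Proof.
  unfold leq_A. split.
  - intros Hxy u v Hx. rewrite <- Hxy in Hx. apply lhd_rel in Hx. tauto.
  - intros Hsub. apply th_inj.
    extensionality u. extensionality v. apply propositional_extensionality.
    rewrite lhd_rel. split.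
    + intros [Hy [w Hw]]. rewrite (th_pfun y u v w Hy (Hsub u w Hw)). exact Hw.
    + intros Hx. split; [exact (Hsub u v Hx)|]. exists v. exact Hx.
Qed.

Lemma leq_lhd_iff l a b :
  leq_A o l (lhd o a b) <->
  leq_A o l b /\ (forall u, dom (th l) u -> dom (th a) u).
Proof.
  rewrite !leq_rel. split.
  - intros Hl. split.
    + intros u v Huv. exact (proj1 (proj1 (lhd_rel a b u v) (Hl u v Huv))).
    + intros u [v Huv]. exact (proj2 (proj1 (lhd_rel a b u v) (Hl u v Huv))).
  - intros [Hlb Hdom] u v Huv. apply lhd_rel.
    split; [exact (Hlb u v Huv)|]. apply Hdom. exists v. exact Huv.
Qed.

Lemma lhd_monotone a b c : leq_A o b c -> leq_A o (lhd o a b) (lhd o a c).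
Proof.
  intros Hbc. apply leq_lhd_iff. split.
  - apply leq_rel. intros u v Huv. apply lhd_rel in Huv.
    exact (proj1 (leq_rel b c) Hbc u v (proj1 Huv)).
  - intros u [v Huv]. exact (proj2 (proj1 (lhd_rel a b u v) Huv)).
Qed.

Lemma lhd_distributes_over_meet (S : A -> Prop) (m a : A) :
  (exists s, S s) -> is_meet o S m ->
  is_meet o (fun t => exists s, S s /\ t = lhd o a s) (lhd o a m).
Proof.
  intros [s0 Hs0] [Hm_lower Hm_greatest]. split.
  - intros t [s [Hs ->]]. exact (lhd_monotone a m s (Hm_lower s Hs)).
  - intros l Hl.
    assert (Hl_s : forall s, S s -> leq_A o l (lhd o a s))
      by (intros s Hs; apply Hl; exists s; split; [exact Hs | reflexivity]).
    apply leq_lhd_iff. split.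
    + apply Hm_greatest. intros s Hs. exact (proj1 (proj1 (leq_lhd_iff l a s) (Hl_s s Hs))).
    + exact (proj2 (proj1 (leq_lhd_iff l a s0) (Hl_s s0 Hs0))).
Qed.

End Representation.

Theorem lemma5p8 (sigma : signature) (A : Type) (o : ops A) :
  sigma s_ar ->
  representable sigma A o ->
  forall (S : A -> Prop) (m : A),
    (exists s, S s) ->
    is_meet o S m ->
    forall a : A,
      is_meet o (fun t => exists s, S s /\ t = lhd o a s) (lhd o a m).
Proof.
  intros Hsig [X [th [Hpfun [Hinj Hpres]]]] S m HS Hmeet a.
  apply (lhd_distributes_over_meet A X o th Hpfun Hinj (proj1 Hpres Hsig));
    assumption.
Qed.
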